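(* Let $I$ be a general ring and $a\in I$. Then $a$ is quasipolar in $I$ if and only if $a=s+q$ where $s\in I$ is strongly regular, $s\in\mathrm{comm}^2(a)$, $q\in QN(I)$, and $sq=qs=0$.
   Context: A general ring is an associative ring not necessarily having an identity. For $p,q\in I$, $p*q=p+q-pq$; $Q(I)=\{q\in I\mid p*q=0=q*p \text{ for some } p\in I\}$; $\mathrm{comm}(a)=\{x\in I\mid xa=ax\}$, $\mathrm{comm}^2(a)=\{x\in I\mid xy=yx\text{ for all }y\in\mathrm{comm}(a)\}$; $QN(I)=\{q\in I\mid qx\in Q(I)\text{ for every }x\in\mathrm{comm}(q)\}$. An element $a\in I$ is quasipolar in $I$ if there is an idempotent $p=p^2\in\mathrm{comm}^2(a)$ with $a+p\in Q(I)$ and $a-ap\in QN(I)$. An element $s\in I$ is strongly regular if $s=sbs$ for some $b\in I$ with $bs=sb$. *)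

(* A "general ring" = associative ring, not necessarily unital:
   an additive abelian group (zmodType) with an associative multiplication
   distributing over addition on both sides. *)
From HB Require Import structures.
From mathcomp Require Import all_boot all_order all_algebra.
Set Implicit Arguments. Unset Strict Implicit. Unset Printing Implicit Defensive.
Import GRing.Theory.
Local Open Scope ring_scope.

Record genRing := GenRing {
  gcarrier :> zmodType;
  gmul : gcarrier -> gcarrier -> gcarrier;
  gmulA : forall x y z, gmul x (gmul y z) = gmul (gmul x y) z;
  gmulDl : forall x y z, gmul (x + y) z = gmul x z + gmul y z;
  gmulDr : forall x y z, gmul x (y + z) = gmul x y + gmul x z
}.

Section Defs.
Variable I : genRing.
Local Notation "x ** y" := (gmul x y) (at level 40, left associativity).

Definition circ (p q : I) : I := p + q - p ** q.

Definition inQ (q : I) : Prop := exists p : I, circ p q = 0 /\ circ q p = 0.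

Definition in_comm (a x : I) : Prop := x ** a = a ** x.

Definition in_comm2 (a x : I) : Prop :=
  forall y : I, in_comm a y -> x ** y = y ** x.

Definition inQN (q : I) : Prop := forall x : I, in_comm q x -> inQ (q ** x).

Definition quasipolar (a : I) : Prop :=
  exists p : I, [/\ p ** p = p, in_comm2 a p, inQ (a + p) & inQN (a - a ** p)].

Definition strongly_regular (s : I) : Prop :=
  exists b : I, s = s ** b ** s /\ b ** s = s ** b.
End Defs.

From HB Require Import structures.
From mathcomp Require Import all_boot all_order all_algebra.
Set Implicit Arguments. Unset Strict Implicit. Unset Printing Implicit Defensive.
Import GRing.Theory.
Local Open Scope ring_scope.

(* Heuristically, in the unitization of I, circ x y = 0 says (1-x)(1-y) = 1,
   so x lies in Q(I) exactly when 1 - x is a unit.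
   Forward direction: s = ap, q = a - ap, and the inverse of ap in the
   corner ring pIp is pup - p, u the quasi-inverse of a + p.
   Backward direction: p = sg; the quasi-inverse of a + p = (s + p) + q is
   (p + g) + w, w the quasi-inverse of q. *)

(* Closes an identity between sums in an additive group once all products
   are distributed: after moving everything to the left, each summand is
   brought next to its opposite and cancelled. *)
Ltac bubble_right t := repeat rewrite (addrAC _ t).
Ltac cancel_opposites :=
  repeat match goal with
  | |- context [- ?t] => bubble_right t; bubble_right (- t); rewrite addrK
  end.
Ltac zmod_solve :=
  apply/eqP; rewrite -subr_eq0; apply/eqP;
  rewrite -(add0r (_ - _)) ?opprD ?opprK ?addrA; cancel_opposites; by rewrite ?subrr.

Section GeneralRing.
Variable I : genRing.
Local Notation "x ** y" := (gmul x y) (at level 40, left associativity).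
Implicit Types a b g p q s u w x y z : I.

Lemma gmul0r x : 0 ** x = 0.
Proof. by apply/(addrI (0 ** x)); rewrite -gmulDl !addr0. Qed.

Lemma gmulr0 x : x ** 0 = 0.
Proof. by apply/(addrI (x ** 0)); rewrite -gmulDr !addr0. Qed.

Lemma gmulNl x y : (- x) ** y = - (x ** y).
Proof. by apply/(addrI (x ** y)); rewrite -gmulDl !subrr gmul0r. Qed.

Lemma gmulNr x y : x ** (- y) = - (x ** y).
Proof. by apply/(addrI (x ** y)); rewrite -gmulDr !subrr gmulr0. Qed.

Lemma gmulBl x y z : (x - y) ** z = x ** z - y ** z.
Proof. by rewrite gmulDl gmulNl. Qed.

Lemma gmulBr x y z : x ** (y - z) = x ** y - x ** z.
Proof. by rewrite gmulDr gmulNr. Qed.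

Lemma circ0l x : circ 0 x = x.
Proof. by rewrite /circ gmul0r add0r subr0. Qed.

Lemma circ0r x : circ x 0 = x.
Proof. by rewrite /circ gmulr0 addr0 subr0. Qed.

Lemma circA x y z : circ x (circ y z) = circ (circ x y) z.
Proof. by rewrite /circ gmulBr gmulBl !gmulDr !gmulDl gmulA; zmod_solve. Qed.

Definition is_qinv w q : Prop := circ w q = 0 /\ circ q w = 0.

Lemma circ_inv_uniq w q w' : circ w q = 0 -> circ q w' = 0 -> w = w'.
Proof. by move=> wq qw'; rewrite -[w]circ0r -qw' circA wq circ0l. Qed.

(* q^2 = (-q) o q = q o (-q), so a quasi-inverse v of q^2 gives the left
   quasi-inverse v o (-q) and the right one (-q) o v of q. *)
Lemma inQ_of_sqr q : inQ (q ** q) -> inQ q.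
Proof.
case=> v [vqq qqv].
have sqrE : q ** q = circ (- q) q /\ q ** q = circ q (- q).
  by rewrite /circ gmulNl gmulNr !opprK addNr addrN !add0r.
have left_inv : circ (circ v (- q)) q = 0 by rewrite -circA -sqrE.1.
have right_inv : circ q (circ (- q) v) = 0 by rewrite circA -sqrE.2.
exists (circ v (- q)); split=> //.
by rewrite (circ_inv_uniq left_inv right_inv).
Qed.

(* Quasinilpotent elements are quasi-invertible: q commutes with itself. *)
Lemma inQN_inQ q : inQN q -> inQ q.
Proof. by move=> qn; apply: inQ_of_sqr; exact: qn. Qed.

Definition orth x y : Prop := x ** y = 0 /\ y ** x = 0.

Lemma orthDl x y z : orth x z -> orth y z -> orth (x + y) z.
Proof.
by move=> [xz zx] [yz zy]; split; rewrite (gmulDl, gmulDr) ?xz ?zx ?yz ?zy addr0.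
Qed.

Lemma orthMl x y z : orth x z -> orth y z -> orth (x ** y) z.
Proof.
move=> [_ zx] [yz _].
by split; rewrite (gmulA, =^~ gmulA) (yz, zx) (gmulr0, gmul0r).
Qed.

(* Whatever is orthogonal to q is orthogonal to its quasi-inverse:
   x w = x (q + w - qw) = x (q o w) when xq = 0, and symmetrically. *)
Lemma orth_qinv x q w : orth x q -> is_qinv w q -> orth x w.
Proof.
move=> [xq qx] [wq qw]; split.
- have := congr1 (fun y => x ** y) qw.
  by rewrite /circ gmulBr gmulDr gmulA xq gmul0r add0r subr0 gmulr0.
- have := congr1 (fun y => y ** x) wq.
  by rewrite /circ gmulBl gmulDl -gmulA qx gmulr0 addr0 subr0 gmul0r.
Qed.

Lemma inQ_add_orth x x' y y' :
  is_qinv x' x -> is_qinv y' y -> orth x y' -> orth x' y -> inQ (x + y).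
Proof.
move=> [x'x xx'] [y'y yy'] [xy' y'x] [x'y yx']; exists (x' + y'); split.
- have -> : circ (x' + y') (x + y) = circ x' x + circ y' y - x' ** y - y' ** x.
    by rewrite /circ !gmulDl !gmulDr; zmod_solve.
  by rewrite x'x y'y x'y y'x !subr0 addr0.
- have -> : circ (x + y) (x' + y') = circ x x' + circ y y' - x ** y' - y ** x'.
    by rewrite /circ !gmulDl !gmulDr; zmod_solve.
  by rewrite xx' yy' xy' yx' !subr0 addr0.
Qed.

Lemma in_comm2_self a : in_comm2 a a.
Proof. by move=> y. Qed.

Lemma in_comm2M a x y : in_comm2 a x -> in_comm2 a y -> in_comm2 a (x ** y).
Proof. by move=> cx cy z az; rewrite -gmulA (cy z az) gmulA (cx z az) gmulA. Qed.

(* Group inverses: the inverse of s in the corner ring (sg) I (sg). *)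
Definition group_inverse s g : Prop :=
  [/\ s ** g = g ** s, s ** g ** s = s & g ** s ** g = g].

(* A strongly regular element s = sbs, bs = sb has group inverse s b b. *)
Lemma strongly_regular_group_inverse s :
  strongly_regular s -> exists g, group_inverse s g.
Proof.
case=> b [sbs bs].
have ssb : s ** s ** b = s by rewrite -gmulA -bs gmulA -sbs.
have sg : s ** (s ** b ** b) = s ** b by rewrite !gmulA ssb.
have gs : s ** b ** b ** s = s ** b by rewrite -gmulA bs gmulA -sbs.
exists (s ** b ** b); split.
- by rewrite sg gs.
- by rewrite sg -sbs.
- by rewrite gs !gmulA -sbs.
Qed.

Section GroupInverse.
Variables s g : I.
Hypothesis sgi : group_inverse s g.

(* p = sg is the unit of the corner ring containing s and g. *)
Lemma group_inverse_idem : s ** g ** (s ** g) = s ** g.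
Proof. by case: sgi => _ sgs _; rewrite gmulA sgs. Qed.

Lemma group_inverse_unitl : s ** g ** s = s.
Proof. by case: sgi. Qed.

Lemma group_inverse_unitr : s ** (s ** g) = s.
Proof. by case: sgi => sg sgs _; rewrite sg gmulA. Qed.

Lemma group_inverse_invl : s ** g ** g = g.
Proof. by case: sgi => sg _ gsg; rewrite sg. Qed.

Lemma group_inverse_invr : g ** (s ** g) = g.
Proof. by case: sgi => _ _ gsg; rewrite gmulA. Qed.

Lemma group_inverse_ggs : g ** g ** s = g.
Proof. by case: sgi => sg _ _; rewrite -gmulA -sg group_inverse_invr. Qed.

Lemma orth_group_inverse q : orth s q -> orth g q.
Proof.
move=> [sq qs]; split.
- by rewrite -group_inverse_ggs -gmulA sq gmulr0.
- by rewrite -group_inverse_invl !gmulA qs !gmul0r.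
Qed.

(* g commutes with everything that commutes with s:
   gy = gy(sg) = (sg)yg = yg. *)
Lemma group_inverse_comm y : s ** y = y ** s -> g ** y = y ** g.
Proof.
case: sgi => sg _ _ sy.
have gyE : g ** y = g ** g ** y ** s.
  by rewrite -{1}group_inverse_ggs -gmulA sy gmulA.
have ygE : y ** g = s ** y ** g ** g.
  by rewrite -{1}group_inverse_invl !gmulA -sy.
have gy_p : g ** y ** (s ** g) = g ** y by rewrite gyE -gmulA group_inverse_unitr.
have p_yg : s ** g ** (y ** g) = y ** g by rewrite ygE !gmulA group_inverse_unitl.
by rewrite -gy_p -p_yg !gmulA -[g ** y ** s]gmulA -sy gmulA -sg.
Qed.

Lemma in_comm2_group_inverse a : in_comm2 a s -> in_comm2 a g.
Proof. by move=> cs y ay; apply: group_inverse_comm; exact: cs. Qed.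

(* (1 - p - g)(1 - s - p) = 1 = (1 - s - p)(1 - p - g) with p = sg. *)
Lemma group_inverse_qinv : is_qinv (s ** g + g) (s + s ** g).
Proof.
case: sgi => sg sgs gsg.
rewrite /is_qinv /circ !gmulDl !gmulDr group_inverse_idem sgs
        group_inverse_unitr group_inverse_invl group_inverse_invr.
by rewrite -[g ** s]sg; split; zmod_solve.
Qed.

End GroupInverse.

(* Backward direction: with p = sg, a + p = (s + p) + q has quasi-inverse
   (p + g) + w where w is a quasi-inverse of q. *)
Lemma inQ_orth_shift s g q :
  group_inverse s g -> orth s q -> inQ q -> inQ (s + q + s ** g).
Proof.
move=> sgi sq [w qw].
have gq := orth_group_inverse sgi sq.
have pq : orth (s ** g) q by exact: orthMl.
have sw := orth_qinv sq qw; have gw := orth_qinv gq qw; have pw := orth_qinv pq qw.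
rewrite addrAC; apply: (inQ_add_orth (group_inverse_qinv sgi) qw).
- exact: orthDl.
- exact: orthDl.
Qed.

Section Quasipolar.
Variables a p u : I.
Hypotheses (pp : p ** p = p) (pa : p ** a = a ** p) (ua : is_qinv u (a + p)).

(* Multiplying (a + p) o u = 0 on the left by p gives (ap) u = ap + p;
   multiplying u o (a + p) = 0 on the right by p gives u (ap) = ap + p. *)
Lemma quasipolar_corner_r : a ** p ** u = a ** p + p.
Proof.
case: ua => _ apu; have := congr1 (fun y => p ** y) apu.
have -> : p ** circ (a + p) u = p ** a + p - p ** a ** u.
  by rewrite /circ gmulBr !(gmulDr, gmulDl) !gmulA pp; zmod_solve.
by rewrite gmulr0 pa => /subr0_eq ->.
Qed.

Lemma quasipolar_corner_l : u ** (a ** p) = a ** p + p.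
Proof.
case: ua => uap _; have := congr1 (fun y => y ** p) uap.
have -> : circ u (a + p) ** p = a ** p + p - u ** a ** p.
  by rewrite /circ gmulBl !(gmulDl, gmulDr) -!gmulA pp !gmulA; zmod_solve.
by rewrite gmul0r gmulA => /subr0_eq ->.
Qed.

(* pup - p inverts ap in the corner ring pIp, so ap is strongly regular. *)
Lemma quasipolar_strongly_regular : strongly_regular (a ** p).
Proof.
have app : a ** p ** p = a ** p by rewrite -gmulA pp.
have pap : p ** (a ** p) = a ** p by rewrite gmulA pa app.
have sb : a ** p ** (p ** u ** p - p) = p.
  by rewrite gmulBr !gmulA app quasipolar_corner_r gmulDl pp app addrAC subrr add0r.
have bs : (p ** u ** p - p) ** (a ** p) = p.
  by rewrite gmulBl -!gmulA pap quasipolar_corner_l gmulDr pap pp addrAC subrr add0r.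
by exists (p ** u ** p - p); rewrite bs sb pap.
Qed.

(* ap and a - ap are orthogonal, since p is an idempotent commuting with a. *)
Lemma quasipolar_orth : orth (a ** p) (a - a ** p).
Proof.
have apa : a ** p ** a = a ** a ** p by rewrite -gmulA pa gmulA.
have apap : a ** p ** (a ** p) = a ** a ** p by rewrite gmulA apa -gmulA pp.
by split; rewrite (gmulBr, gmulBl) apap ?apa ?gmulA subrr.
Qed.

End Quasipolar.

End GeneralRing.

Theorem theorem2p16 (I : genRing) (a : I) :
  quasipolar a <->
  exists s q : I,
    [/\ a = s + q, strongly_regular s, in_comm2 a s, inQN q
      & gmul s q = 0 /\ gmul q s = 0].
Proof.
split.
- case=> p [pp pc2 [u ua] qn].
  have pa : gmul p a = gmul a p by exact: pc2.
  exists (gmul a p), (a - gmul a p); split.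
  + by rewrite addrC subrK.
  + exact: quasipolar_strongly_regular ua.
  + exact: in_comm2M (in_comm2_self (a := a)) pc2.
  + exact: qn.
  + exact: quasipolar_orth pp pa.
- case=> s [q [-> /strongly_regular_group_inverse [g sgi] sc2 qn sq]].
  exists (gmul s g); split.
  + exact: group_inverse_idem sgi.
  + exact: in_comm2M sc2 (in_comm2_group_inverse sgi sc2).
  + exact: inQ_orth_shift sgi sq (inQN_inQ qn).
  + (* (s + q) - (s + q) sg = q, as s sg = s and q sg = 0. *)
    have [_ qp] := orthMl sq (orth_group_inverse sgi sq).
    by rewrite gmulDl group_inverse_unitr // qp addr0 addrC addKr.
Qed.
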